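(* Let \(X\) be a set with \(|X| = 2^{\aleph_{0}}\). Then there is a metric \(d^{*} \colon X^{2} \to [0,\infty)\) such that: (i) for every ultrametric \(\rho\), the mappings \(\rho\) and \(d^{*}\) are not combinatorially similar; (ii) for every \(X_1 \subseteq X\) with \(|X_1| \leqslant \aleph_{0}\), the restriction of \(d^{*}\) to \(X_1^2\) is combinatorially similar to an ultrametric.
   Context: For a mapping \(F\) with domain \(A\), \(F(A)\) denotes its range. An ultrametric on a set \(Z\) is a metric \(d\) with \(d(x,y)\le\max\{d(x,z),d(z,y)\}\) for all \(x,y,z\). For nonempty sets \(X,Y\) and mappings \(\Phi\) with domain \(X^2\), \(\Psi\) with domain \(Y^2\), \(\Phi\) is combinatorially similar to \(\Psi\) if there are bijections \(f\colon \Phi(X^2)\to\Psi(Y^2)\) and \(g\colon Y\to X\) with \(\Psi(x,y)=f(\Phi(g(x),g(y)))\) for all \(x,y\in Y\). *)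

From Stdlib Require Export Reals.
Open Scope R_scope.

Definition injective {A B : Type} (f : A -> B) : Prop :=
  forall a1 a2, f a1 = f a2 -> a1 = a2.
Definition surjective {A B : Type} (f : A -> B) : Prop :=
  forall b, exists a, f a = b.
Definition bijective {A B : Type} (f : A -> B) : Prop :=
  injective f /\ surjective f.

Definition has_continuum_card (X : Type) : Prop :=
  exists h : X -> R, bijective h.

Definition at_most_countable {X : Type} (A : X -> Prop) : Prop :=
  exists h : {x : X | A x} -> nat, injective h.

Definition is_metric {Z : Type} (d : Z -> Z -> R) : Prop :=
  (forall x y, 0 <= d x y) /\
  (forall x y, d x y = 0 <-> x = y) /\
  (forall x y, d x y = d y x) /\
  (forall x y z, d x y <= d x z + d z y).

Definition is_ultrametric {Z : Type} (d : Z -> Z -> R) : Prop :=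
  is_metric d /\ (forall x y z, d x y <= Rmax (d x z) (d z y)).

Definition in_range {X A : Type} (Phi : X -> X -> A) (a : A) : Prop :=
  exists x y, Phi x y = a.
Definition range2 {X A : Type} (Phi : X -> X -> A) : Type := {a : A | in_range Phi a}.
Definition range_pt {X A : Type} (Phi : X -> X -> A) (x y : X) : range2 Phi :=
  exist _ (Phi x y) (ex_intro _ x (ex_intro _ y eq_refl)).

Definition comb_similar {X Y A B : Type} (Phi : X -> X -> A) (Psi : Y -> Y -> B) : Prop :=
  exists (f : range2 Phi -> range2 Psi) (g : Y -> X),
    bijective f /\ bijective g /\
    forall x y : Y, Psi x y = proj1_sig (f (range_pt Phi (g x) (g y))).

Definition restrict2 {X A : Type} (d : X -> X -> A) (X1 : X -> Prop)
  : {x : X | X1 x} -> {x : X | X1 x} -> A :=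
  fun a b => d (proj1_sig a) (proj1_sig b).

From Stdlib Require Import Reals.
From Stdlib Require Import ZArith Lra Lia ClassicalEpsilon ProofIrrelevance Cantor.
Open Scope R_scope.

(* Order R by absolute value first and sign second ([abs_lt]).  Then 0 is the
   least element and each pair -t < t (t > 0) is a jump, so that there are
   uncountably many jumps.  For a bijection h : X -> R put
   d*(x, y) = e (max (h x) (h y)) when x <> y, the maximum being taken for this
   order and e an injection of R into [1, 2]; any such function is a metric.

   (i) If an ultrametric rho had the same level sets as d*, then, with o the
   preimage of 0, every triangle o, a, b with 0 <> h a below h b has
   d*(o, b) = d*(a, b) and d*(o, a) <> d*(o, b); being isosceles in rho it
   gives rho(o, a) < rho(o, b).  So r |-> rho(o, h^-1 r) embeds (R \ {0}, abs_lt) into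
   (R, <), sending the jumps to uncountably many disjoint open intervals, each
   containing its own rational.

   (ii) On a countable subset with enumeration e, replace e by the weight
   r |-> 1 + sum of 2^-(e p) over the points p below r.  It is monotone, and
   strictly increasing on the subset, so the same max formula with this weight
   is an ultrametric with the same level sets as d*. *)

Definition abs_lt (r s : R) : Prop := Rabs r < Rabs s \/ (Rabs r = Rabs s /\ r < s).
Definition abs_le (r s : R) : Prop := abs_lt r s \/ r = s.

Lemma abs_lt_irrefl r : ~ abs_lt r r.
Proof. unfold abs_lt; lra. Qed.

Lemma abs_lt_trans r s t : abs_lt r s -> abs_lt s t -> abs_lt r t.
Proof. unfold abs_lt; lra. Qed.

Lemma abs_lt_le_trans r s t : abs_lt r s -> abs_le s t -> abs_lt r t.
Proof. intros Hrs [Hst | <-]; [exact (abs_lt_trans _ _ _ Hrs Hst) | exact Hrs]. Qed.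

Lemma abs_lt_total r s : r <> s -> abs_lt r s \/ abs_lt s r.
Proof.
  unfold abs_lt; intros Hrs.
  destruct (Rtotal_order (Rabs r) (Rabs s)) as [H | [H | H]]; [lra | | lra].
  destruct (Rtotal_order r s) as [H' | [H' | H']]; [lra | contradiction | lra].
Qed.

Lemma abs_lt_0_l r : r <> 0 -> abs_lt 0 r.
Proof. intros Hr; left; rewrite Rabs_R0; exact (Rabs_pos_lt r Hr). Qed.

Lemma abs_lt_0_r r : ~ abs_lt r 0.
Proof.
  unfold abs_lt; rewrite Rabs_R0; intros Hr0.
  destruct (Req_dec r 0) as [-> | Hr].
  - rewrite Rabs_R0 in Hr0; lra.
  - pose proof (Rabs_pos_lt r Hr); lra.
Qed.

Definition abs_max (r s : R) : R := if excluded_middle_informative (abs_lt r s) then s else r.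

Lemma abs_max_comm r s : abs_max r s = abs_max s r.
Proof.
  unfold abs_max.
  destruct (excluded_middle_informative (abs_lt r s)) as [Hrs | Hrs];
  destruct (excluded_middle_informative (abs_lt s r)) as [Hsr | Hsr]; auto.
  - destruct (abs_lt_irrefl r (abs_lt_trans _ _ _ Hrs Hsr)).
  - destruct (Req_dec r s) as [-> | Hne]; auto. destruct (abs_lt_total r s Hne); tauto.
Qed.

Lemma abs_max_cases r s : abs_max r s = r \/ abs_max r s = s.
Proof. unfold abs_max; destruct (excluded_middle_informative (abs_lt r s)); auto. Qed.

Lemma abs_max_r r s : abs_lt r s -> abs_max r s = s.
Proof. unfold abs_max; destruct (excluded_middle_informative (abs_lt r s)); tauto. Qed.

Lemma abs_le_max_l r s : abs_le r (abs_max r s).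
Proof. unfold abs_max, abs_le; destruct (excluded_middle_informative (abs_lt r s)); auto. Qed.

Lemma abs_le_max_r r s : abs_le s (abs_max r s).
Proof. rewrite abs_max_comm; apply abs_le_max_l. Qed.

Definition avoid_step (f : nat -> R) (n : nat) (p : R * R) : R * R :=
  let (l, r) := p in
  if Rlt_dec (f n) ((l + r) / 2) then (l + 2 * (r - l) / 3, r) else (l, l + (r - l) / 3).

Fixpoint avoid_interval (f : nat -> R) (n : nat) : R * R :=
  match n with O => (0, 1) | S k => avoid_step f k (avoid_interval f k) end.

Lemma avoid_step_spec f n l r : l < r ->
  let p := avoid_step f n (l, r) in
  l <= fst p /\ fst p < snd p /\ snd p <= r /\ (f n < fst p \/ snd p < f n).
Proof. intros Hlr; simpl; destruct (Rlt_dec (f n) ((l + r) / 2)); simpl; lra. Qed.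

Lemma avoid_interval_lt f n : fst (avoid_interval f n) < snd (avoid_interval f n).
Proof.
  induction n as [|n IHn]; simpl; [lra|].
  destruct (avoid_interval f n) as [l r]; simpl in IHn.
  pose proof (avoid_step_spec f n l r IHn); simpl in *; tauto.
Qed.

Lemma avoid_interval_nested f n m :
  fst (avoid_interval f n) <= fst (avoid_interval f (n + m)) /\
  snd (avoid_interval f (n + m)) <= snd (avoid_interval f n).
Proof.
  induction m as [|m IHm]; [rewrite Nat.add_0_r; lra|].
  rewrite Nat.add_succ_r; simpl. pose proof (avoid_interval_lt f (n + m)) as Hlt.
  destruct (avoid_interval f (n + m)) as [l r]; simpl in *.
  pose proof (avoid_step_spec f (n + m) l r Hlt); simpl in *; lra.
Qed.

Lemma avoid_interval_cross f n m : fst (avoid_interval f n) < snd (avoid_interval f m).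
Proof.
  destruct (Nat.le_ge_cases n m) as [Hnm | Hmn].
  - replace m with (n + (m - n))%nat by lia.
    pose proof (avoid_interval_nested f n (m - n)).
    pose proof (avoid_interval_lt f (n + (m - n))); lra.
  - replace n with (m + (n - m))%nat by lia.
    pose proof (avoid_interval_nested f m (n - m)).
    pose proof (avoid_interval_lt f (m + (n - m))); lra.
Qed.

Lemma R_not_enumerable (f : nat -> R) : exists x, forall n, x <> f n.
Proof.
  set (E := fun y => exists n, y = fst (avoid_interval f n)).
  assert (E_bound : bound E).
  { exists 1; intros y [n ->]. pose proof (avoid_interval_cross f n 0); simpl in *; lra. }
  assert (E_inhabited : exists y, E y) by (exists 0, 0%nat; reflexivity).
  destruct (completeness E E_bound E_inhabited) as [x [x_ub x_least]].
  exists x; intros n ->.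
  assert (Hl : fst (avoid_interval f (S n)) <= f n) by (apply x_ub; exists (S n); auto).
  assert (Hr : f n <= snd (avoid_interval f (S n))).
  { apply x_least; intros y [m ->]; left; apply avoid_interval_cross. }
  simpl in Hl, Hr. pose proof (avoid_interval_lt f n) as Hlt.
  destruct (avoid_interval f n) as [l r]; simpl in *.
  pose proof (avoid_step_spec f n l r Hlt); simpl in *; lra.
Qed.

Lemma no_injection_R_nat (q : R -> nat) : ~ injective q.
Proof.
  intros q_inj.
  destruct (choice (fun n x => (exists y, q y = n) -> q x = n)) as [f Hf].
  { intros n. destruct (classic (exists y, q y = n)) as [[y Hy] | Hn].
    - exists y; auto.
    - exists 0; tauto. }
  destruct (R_not_enumerable f) as [x Hx].
  apply (Hx (q x)), q_inj; symmetry; apply Hf; eauto.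
Qed.

Lemma exists_nat_between x : 0 <= x -> exists k : nat, x < INR k <= x + 1.
Proof.
  intros Hx. destruct (archimed x) as [H1 H2].
  assert (Hup : (0 < up x)%Z) by (apply lt_0_IZR; lra).
  exists (Z.to_nat (up x)). rewrite INR_IZR_INZ, Z2Nat.id by lia. lra.
Qed.

Lemma exists_ratio_between a b : 0 <= a -> a < b ->
  exists m n : nat, a < INR m / INR (S n) < b.
Proof.
  intros Ha Hab.
  assert (Hinv : 0 <= / (b - a)) by (left; apply Rinv_0_lt_compat; lra).
  destruct (exists_nat_between _ Hinv) as [n [Hn _]].
  set (N := INR (S n)).
  assert (HN : N = INR n + 1) by (unfold N; rewrite S_INR; lra).
  assert (HN0 : 0 < N) by (pose proof (pos_INR n); lra).
  assert (HbN : 1 < (b - a) * N).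
  { assert (/ (b - a) * (b - a) = 1) by (field; lra). nra. }
  assert (HaN : 0 <= a * N) by nra.
  destruct (exists_nat_between _ HaN) as [m Hm].
  exists m, n; fold N.
  split; apply (Rmult_lt_reg_r N); auto; unfold Rdiv;
    rewrite Rmult_assoc, Rinv_l by lra; lra.
Qed.

Lemma no_real_indexed_disjoint_intervals (a b : R -> R) :
  (forall u, 0 <= a u) -> (forall u, a u < b u) -> (forall u v, u < v -> b u <= a v) -> False.
Proof.
  intros a_ge0 a_lt_b disjoint.
  destruct (choice (fun u (p : nat * nat) => a u < INR (fst p) / INR (S (snd p)) < b u))
    as [ratio Hratio].
  { intros u. destruct (exists_ratio_between (a u) (b u) (a_ge0 u) (a_lt_b u)) as [m [n Hmn]].
    exists (m, n); exact Hmn. }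
  apply (no_injection_R_nat (fun u => to_nat (ratio u))).
  intros u v Huv. apply to_nat_inj in Huv.
  pose proof (Hratio u) as Hu; pose proof (Hratio v) as Hv; rewrite Huv in Hu.
  destruct (Rtotal_order u v) as [Hlt | [Heq | Hlt]]; auto;
    pose proof (disjoint _ _ Hlt); lra.
Qed.

Lemma abs_lt_not_embeddable (A : R -> R) :
  (forall r, 0 <= A r) -> (forall r s, r <> 0 -> abs_lt r s -> A r < A s) -> False.
Proof.
  intros A_ge0 A_mono.
  apply (no_real_indexed_disjoint_intervals (fun u => A (- exp u)) (fun u => A (exp u))).
  - intros u; apply A_ge0.
  - intros u. pose proof (exp_pos u).
    apply A_mono; [lra | right; rewrite Rabs_Ropp; split; lra].
  - intros u v Huv. pose proof (exp_pos u); pose proof (exp_pos v).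
    pose proof (exp_increasing _ _ Huv).
    left; apply A_mono; [lra | left].
    rewrite Rabs_Ropp, !Rabs_right by lra; lra.
Qed.

Definition indicator (P : nat -> Prop) (n : nat) : R :=
  if excluded_middle_informative (P n) then 1 else 0.

Fixpoint dyadic_partial (P : nat -> Prop) (N : nat) : R :=
  match N with O => 0 | S n => dyadic_partial P n + indicator P n * (/ 2) ^ n end.

Lemma indicator_bounds P n : 0 <= indicator P n <= 1.
Proof. unfold indicator; destruct (excluded_middle_informative (P n)); lra. Qed.

Lemma indicator_subset (P Q : nat -> Prop) n : (P n -> Q n) -> indicator P n <= indicator Q n.
Proof.
  unfold indicator; intros HPQ.
  destruct (excluded_middle_informative (P n)), (excluded_middle_informative (Q n)); tauto || lra.
Qed.

Lemma half_pow_pos n : 0 < (/ 2) ^ n.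
Proof. apply pow_lt; lra. Qed.

Lemma dyadic_partial_le_2 P N : dyadic_partial P N <= 2 - 2 * (/ 2) ^ N.
Proof.
  induction N as [|N IHN]; simpl; [lra|].
  pose proof (indicator_bounds P N); pose proof (half_pow_pos N); nra.
Qed.

Lemma dyadic_partial_le_add P N m : dyadic_partial P N <= dyadic_partial P (N + m).
Proof.
  induction m as [|m IHm]; [rewrite Nat.add_0_r; lra|].
  rewrite Nat.add_succ_r; simpl.
  pose proof (indicator_bounds P (N + m)); pose proof (half_pow_pos (N + m)); nra.
Qed.

Lemma dyadic_partial_subset (P Q : nat -> Prop) N :
  (forall n, P n -> Q n) -> dyadic_partial P N <= dyadic_partial Q N.
Proof.
  intros HPQ; induction N as [|N IHN]; simpl; [lra|].
  pose proof (indicator_subset P Q N (HPQ N)); pose proof (half_pow_pos N); nra.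
Qed.

Lemma dyadic_partial_gap (P Q : nat -> Prop) k N :
  (forall n, P n -> Q n) -> Q k -> ~ P k -> (k < N)%nat ->
  dyadic_partial P N + (/ 2) ^ k <= dyadic_partial Q N.
Proof.
  intros HPQ HQk HPk; induction N as [|N IHN]; intros HkN; [lia|]; simpl.
  pose proof (indicator_subset P Q N (HPQ N)); pose proof (half_pow_pos N).
  destruct (Nat.eq_dec k N) as [<- | Hne].
  - pose proof (dyadic_partial_subset P Q k HPQ).
    unfold indicator; destruct (excluded_middle_informative (P k)); [tauto|].
    destruct (excluded_middle_informative (Q k)); [lra | tauto].
  - specialize (IHN ltac:(lia)); nra.
Qed.

Lemma dyadic_partial_bounded P : bound (fun y => exists N, y = dyadic_partial P N).
Proof.
  exists 2; intros y [N ->].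
  pose proof (dyadic_partial_le_2 P N); pose proof (half_pow_pos N); lra.
Qed.

Definition dyadic_mass (P : nat -> Prop) : R :=
  proj1_sig (completeness _ (dyadic_partial_bounded P) (ex_intro _ 0 (ex_intro _ O eq_refl))).

Lemma dyadic_mass_lub P : is_lub (fun y => exists N, y = dyadic_partial P N) (dyadic_mass P).
Proof. unfold dyadic_mass; destruct completeness; assumption. Qed.

Lemma dyadic_mass_ge0 P : 0 <= dyadic_mass P.
Proof. apply (dyadic_mass_lub P); exists O; reflexivity. Qed.

Lemma dyadic_mass_subset (P Q : nat -> Prop) :
  (forall n, P n -> Q n) -> dyadic_mass P <= dyadic_mass Q.
Proof.
  intros HPQ; apply (dyadic_mass_lub P); intros y [N ->].
  apply Rle_trans with (dyadic_partial Q N); [now apply dyadic_partial_subset|].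
  apply (dyadic_mass_lub Q); eauto.
Qed.

Lemma dyadic_mass_strict (P Q : nat -> Prop) k :
  (forall n, P n -> Q n) -> Q k -> ~ P k -> dyadic_mass P < dyadic_mass Q.
Proof.
  intros HPQ HQk HPk.
  assert (Hgap : dyadic_mass P <= dyadic_mass Q - (/ 2) ^ k).
  { apply (dyadic_mass_lub P); intros y [N ->].
    pose proof (dyadic_partial_le_add P N (S k)).
    pose proof (dyadic_partial_gap P Q k (N + S k) HPQ HQk HPk ltac:(lia)).
    assert (dyadic_partial Q (N + S k) <= dyadic_mass Q) by (apply (dyadic_mass_lub Q); eauto).
    lra. }
  pose proof (half_pow_pos k); lra.
Qed.

Lemma is_ultrametric_intro {Z : Type} (d : Z -> Z -> R) :
  (forall x y, 0 <= d x y) -> (forall x y, d x y = 0 <-> x = y) ->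
  (forall x y, d x y = d y x) -> (forall x y z, d x y <= Rmax (d x z) (d z y)) ->
  is_ultrametric d.
Proof.
  intros d_ge0 d_eq0 d_comm d_ultra; split; [repeat split; auto|]; try apply d_eq0; auto.
  intros x y z; pose proof (d_ultra x y z); pose proof (d_ge0 x z); pose proof (d_ge0 z y).
  unfold Rmax in *; destruct Rle_dec; lra.
Qed.

Section RankDistance.
Context {T : Type} (F : R -> R) (k : T -> R).

Definition rank_dist (x y : T) : R :=
  if excluded_middle_informative (x = y) then 0 else F (abs_max (k x) (k y)).

Lemma rank_dist_diag x : rank_dist x x = 0.
Proof. unfold rank_dist; destruct (excluded_middle_informative (x = x)); tauto. Qed.

Lemma rank_dist_neq x y : x <> y -> rank_dist x y = F (abs_max (k x) (k y)).
Proof. unfold rank_dist; destruct (excluded_middle_informative (x = y)); tauto. Qed.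

Lemma rank_dist_comm x y : rank_dist x y = rank_dist y x.
Proof.
  destruct (excluded_middle_informative (x = y)) as [-> | Hxy]; auto.
  rewrite !rank_dist_neq, abs_max_comm by auto; reflexivity.
Qed.

Lemma rank_dist_metric : (forall r, 1 <= F r <= 2) -> is_metric rank_dist.
Proof.
  intros F_bounds.
  assert (d_bounds : forall x y, x <> y -> 1 <= rank_dist x y <= 2)
    by (intros x y Hxy; rewrite rank_dist_neq by auto; apply F_bounds).
  assert (d_ge0 : forall x y, 0 <= rank_dist x y).
  { intros x y; destruct (excluded_middle_informative (x = y)) as [-> | Hxy].
    - rewrite rank_dist_diag; lra.
    - pose proof (d_bounds x y Hxy); lra. }
  split; [|split; [|split]]; auto.
  - intros x y; split; [|intros ->; apply rank_dist_diag].
    intros Hd; apply NNPP; intros Hxy; pose proof (d_bounds x y Hxy); lra.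
  - exact rank_dist_comm.
  - intros x y z.
    destruct (excluded_middle_informative (x = y)) as [-> | Hxy];
      [rewrite rank_dist_diag; pose proof (d_ge0 y z); pose proof (d_ge0 z y); lra|].
    destruct (excluded_middle_informative (x = z)) as [<- | Hxz];
      [rewrite rank_dist_diag; pose proof (d_ge0 x y); lra|].
    destruct (excluded_middle_informative (z = y)) as [-> | Hzy];
      [rewrite rank_dist_diag; pose proof (d_ge0 x y); lra|].
    pose proof (d_bounds x y Hxy); pose proof (d_bounds x z Hxz); pose proof (d_bounds z y Hzy).
    lra.
Qed.

Lemma rank_dist_ultrametric :
  (forall r, 0 < F r) -> (forall r s, abs_le r s -> F r <= F s) -> is_ultrametric rank_dist.
Proof.
  intros F_pos F_mono.
  assert (d_ge0 : forall x y, 0 <= rank_dist x y).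
  { intros x y; destruct (excluded_middle_informative (x = y)) as [-> | Hxy].
    - rewrite rank_dist_diag; lra.
    - rewrite rank_dist_neq by auto; left; apply F_pos. }
  apply is_ultrametric_intro; auto using rank_dist_comm.
  - intros x y; split; [|intros ->; apply rank_dist_diag].
    intros Hd; apply NNPP; intros Hxy.
    rewrite rank_dist_neq in Hd by auto; pose proof (F_pos (abs_max (k x) (k y))); lra.
  - intros x y z.
    destruct (excluded_middle_informative (x = y)) as [-> | Hxy];
      [rewrite rank_dist_diag; apply Rle_trans with (rank_dist y z); auto using Rmax_l|].
    destruct (excluded_middle_informative (x = z)) as [<- | Hxz];
      [rewrite rank_dist_diag; apply Rmax_r|].
    destruct (excluded_middle_informative (z = y)) as [-> | Hzy];
      [rewrite rank_dist_diag; apply Rmax_l|].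
    rewrite !rank_dist_neq by auto.
    destruct (abs_max_cases (k x) (k y)) as [-> | ->].
    + apply Rle_trans with (F (abs_max (k x) (k z))); [apply F_mono, abs_le_max_l | apply Rmax_l].
    + apply Rle_trans with (F (abs_max (k z) (k y))); [apply F_mono, abs_le_max_r | apply Rmax_r].
Qed.

Lemma rank_dist_eq_iff x y x' y' :
  (forall r, F r <> 0) -> (forall a b, F (k a) = F (k b) -> k a = k b) ->
  rank_dist x y = rank_dist x' y' <->
  (x = y /\ x' = y') \/ (x <> y /\ x' <> y' /\ abs_max (k x) (k y) = abs_max (k x') (k y')).
Proof.
  intros F_nz F_inj.
  destruct (excluded_middle_informative (x = y)) as [<- | Hxy];
  destruct (excluded_middle_informative (x' = y')) as [<- | Hxy'];
    rewrite ?rank_dist_diag, ?rank_dist_neq by auto.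
  - tauto.
  - split; [intros Hd; destruct (F_nz _ (eq_sym Hd)) | tauto].
  - split; [intros Hd; destruct (F_nz _ Hd) | tauto].
  - split; [|intros [[] | [_ [_ ->]]]; tauto].
    intros HF; right; do 2 (split; auto).
    destruct (abs_max_cases (k x) (k y)) as [Hm | Hm];
    destruct (abs_max_cases (k x') (k y')) as [Hm' | Hm'];
      rewrite Hm, Hm' in HF |- *; auto.
Qed.
End RankDistance.


Lemma rank_dist_comp {S T : Type} (F : R -> R) (k : T -> R) (j : S -> T) (a b : S) :
  injective j -> rank_dist F k (j a) (j b) = rank_dist F (fun c => k (j c)) a b.
Proof.
  intros j_inj; unfold rank_dist.
  destruct (excluded_middle_informative (j a = j b)) as [Hj | Hj];
  destruct (excluded_middle_informative (a = b)) as [Hab | Hab]; subst; auto.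
  - destruct (Hab (j_inj _ _ Hj)).
  - destruct (Hj eq_refl).
Qed.

Lemma rank_dist_level_sets {T : Type} (F G : R -> R) (k : T -> R) x y x' y' :
  (forall r, F r <> 0) -> (forall a b, F (k a) = F (k b) -> k a = k b) ->
  (forall r, G r <> 0) -> (forall a b, G (k a) = G (k b) -> k a = k b) ->
  rank_dist F k x y = rank_dist F k x' y' <-> rank_dist G k x y = rank_dist G k x' y'.
Proof.
  intros F_nz F_inj G_nz G_inj.
  rewrite (rank_dist_eq_iff F), (rank_dist_eq_iff G) by auto; reflexivity.
Qed.

Lemma proj1_sig_injective {A : Type} {P : A -> Prop} : injective (@proj1_sig A P).
Proof. intros [a Ha] [b Hb]; simpl; apply subset_eq_compat. Qed.

Lemma comb_similar_level_sets {X Y A B : Type} (Phi : X -> X -> A) (Psi : Y -> Y -> B) :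
  comb_similar Phi Psi -> exists g : Y -> X, forall x y x' y',
    Psi x y = Psi x' y' <-> Phi (g x) (g y) = Phi (g x') (g y').
Proof.
  intros [f [g [[f_inj _] [_ Hf]]]]; exists g; intros x y x' y'.
  rewrite !Hf; split.
  - intros Hv; apply proj1_sig_injective, f_inj in Hv.
    exact (f_equal (@proj1_sig _ _) Hv).
  - intros Hv; do 2 f_equal; apply proj1_sig_injective; exact Hv.
Qed.

Lemma comb_similar_of_level_sets {Y A B : Type} (Phi : Y -> Y -> A) (Psi : Y -> Y -> B) :
  (forall x y x' y', Phi x y = Phi x' y' <-> Psi x y = Psi x' y') -> comb_similar Phi Psi.
Proof.
  intros Hlevel.
  destruct (choice (fun (v : range2 Phi) (p : Y * Y) => Phi (fst p) (snd p) = proj1_sig v))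
    as [pick Hpick].
  { intros [v [x [y Hv]]]; exists (x, y); exact Hv. }
  set (f := fun v => range_pt Psi (fst (pick v)) (snd (pick v))).
  assert (Hf : forall x y, Psi x y = proj1_sig (f (range_pt Phi x y))).
  { intros x y; apply Hlevel; symmetry; apply (Hpick (range_pt Phi x y)). }
  exists f, (fun y => y); split; [split|split; [split|exact Hf]].
  - intros v w Hvw. apply proj1_sig_injective.
    rewrite <- Hpick, <- (Hpick w); apply Hlevel.
    exact (f_equal (@proj1_sig _ _) Hvw).
  - intros [b [x [y <-]]]; exists (range_pt Phi x y).
    apply proj1_sig_injective; simpl; symmetry; apply Hf.
  - intros y y'; auto.
  - intros y; exists y; reflexivity.
Qed.

Lemma rank_dist_not_comb_similar_ultrametric {X : Type} (F : R -> R) (h : X -> R) :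
  surjective h -> injective F -> (forall r, F r <> 0) ->
  forall (Y : Type) (rho : Y -> Y -> R), is_ultrametric rho -> ~ comb_similar rho (rank_dist F h).
Proof.
  intros h_surj F_inj F_nz Y rho [[rho_ge0 [_ [rho_comm _]]] rho_ultra] Hsim.
  destruct (comb_similar_level_sets _ _ Hsim) as [g Hg].
  destruct (choice (fun r x => h x = r) h_surj) as [pt Hpt].
  assert (d_pt : forall r s, r <> s -> rank_dist F h (pt r) (pt s) = F (abs_max r s)).
  { intros r s Hrs; rewrite rank_dist_neq, !Hpt; [reflexivity|].
    intros Hp; apply Hrs; rewrite <- (Hpt r), <- (Hpt s), Hp; reflexivity. }
  set (A := fun r => rho (g (pt 0)) (g (pt r))).
  apply (abs_lt_not_embeddable A); [intros r; apply rho_ge0|].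
  intros r s Hr Hrs.
  assert (Hs : 0 <> s) by (intros <-; exact (abs_lt_0_r r Hrs)).
  assert (Hr' : 0 <> r) by auto.
  assert (Hne : r <> s) by (intros ->; exact (abs_lt_irrefl s Hrs)).
  assert (H0s : abs_lt 0 s) by auto using abs_lt_0_l.
  assert (H0r : abs_lt 0 r) by auto using abs_lt_0_l.
  assert (Hsame : rho (g (pt 0)) (g (pt s)) = rho (g (pt r)) (g (pt s))).
  { apply Hg; rewrite !d_pt, !abs_max_r by auto; reflexivity. }
  assert (Hdiff : A r <> A s).
  { intros HA; apply Hg in HA; rewrite !d_pt, !abs_max_r in HA by auto.
    apply Hne, F_inj, HA. }
  pose proof (rho_ultra (g (pt 0)) (g (pt r)) (g (pt s))) as Hiso.
  rewrite (rho_comm (g (pt s))), <- Hsame in Hiso.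
  unfold A in *; unfold Rmax in Hiso; destruct Rle_dec; lra.
Qed.

Section CountableWeight.
Context {Y : Type} (k : Y -> R) (e : Y -> nat).
Hypothesis e_inj : injective e.

Definition rank_weight (r : R) : R :=
  1 + dyadic_mass (fun n => exists p, e p = n /\ abs_lt (k p) r).

Lemma rank_weight_ge1 r : 1 <= rank_weight r.
Proof.
  unfold rank_weight.
  pose proof (dyadic_mass_ge0 (fun n => exists p, e p = n /\ abs_lt (k p) r)); lra.
Qed.

Lemma rank_weight_mono r s : abs_le r s -> rank_weight r <= rank_weight s.
Proof.
  intros Hrs; unfold rank_weight; apply Rplus_le_compat_l, dyadic_mass_subset.
  intros n [p [Hp Hlt]]; exists p; split; [exact Hp | exact (abs_lt_le_trans _ _ _ Hlt Hrs)].
Qed.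

Lemma rank_weight_strict p q : abs_lt (k p) (k q) -> rank_weight (k p) < rank_weight (k q).
Proof.
  intros Hpq; unfold rank_weight; apply Rplus_lt_compat_l, (dyadic_mass_strict _ _ (e p)).
  - intros n [p' [Hp' Hlt]]; exists p'; split; [exact Hp' | exact (abs_lt_trans _ _ _ Hlt Hpq)].
  - exists p; auto.
  - intros [p' [Hp' Hlt]]; apply e_inj in Hp'; subst p'; exact (abs_lt_irrefl _ Hlt).
Qed.

Lemma rank_weight_inj p q : rank_weight (k p) = rank_weight (k q) -> k p = k q.
Proof.
  intros Hw; apply NNPP; intros Hpq.
  destruct (abs_lt_total _ _ Hpq) as [Hlt | Hlt]; apply rank_weight_strict in Hlt; lra.
Qed.
End CountableWeight.

Lemma restrict_rank_dist_comb_similar_ultrametric {X : Type} (F : R -> R) (h : X -> R)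
    (X1 : X -> Prop) :
  injective F -> (forall r, F r <> 0) -> at_most_countable X1 ->
  exists (Y : Type) (rho : Y -> Y -> R),
    is_ultrametric rho /\ comb_similar (restrict2 (rank_dist F h) X1) rho.
Proof.
  intros F_inj F_nz [e e_inj].
  set (k := fun p : {x | X1 x} => h (proj1_sig p)).
  assert (w_nz : forall r, rank_weight k e r <> 0)
    by (intros r; pose proof (rank_weight_ge1 k e r); lra).
  exists _, (rank_dist (rank_weight k e) k); split.
  - apply rank_dist_ultrametric; [intros r; pose proof (rank_weight_ge1 k e r); lra|].
    apply rank_weight_mono.
  - apply comb_similar_of_level_sets; intros x y x' y'; unfold restrict2.
    rewrite !(rank_dist_comp F h (@proj1_sig _ _)) by apply proj1_sig_injective.
    apply rank_dist_level_sets; [auto | intros a b Hab; apply F_inj, Hab | auto |].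
    apply rank_weight_inj, e_inj.
Qed.

Definition atan_code (r : R) : R := 3 / 2 + atan r / 4.

Lemma atan_code_bounds r : 1 <= atan_code r <= 2.
Proof. unfold atan_code; pose proof (atan_bound r); pose proof PI_4; lra. Qed.

Lemma atan_code_inj : injective atan_code.
Proof.
  intros r s Hrs; unfold atan_code in Hrs.
  destruct (Rtotal_order r s) as [Hlt | [Heq | Hlt]]; auto;
    pose proof (atan_increasing _ _ Hlt); lra.
Qed.

Theorem proposition4p11 (X : Type) (HX : has_continuum_card X) :
  exists dstar : X -> X -> R,
    is_metric dstar /\
    (forall (Y : Type) (rho : Y -> Y -> R),
        is_ultrametric rho -> ~ comb_similar rho dstar) /\
    (forall X1 : X -> Prop, at_most_countable X1 ->
        exists (Y : Type) (rho : Y -> Y -> R),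
          is_ultrametric rho /\ comb_similar (restrict2 dstar X1) rho).
Proof.
  destruct HX as [h [_ h_surj]].
  assert (code_nz : forall r, atan_code r <> 0)
    by (intros r; pose proof (atan_code_bounds r); lra).
  exists (rank_dist atan_code h); split; [|split].
  - apply rank_dist_metric, atan_code_bounds.
  - apply rank_dist_not_comb_similar_ultrametric; auto using atan_code_inj.
  - intros X1; apply restrict_rank_dist_comb_similar_ultrametric; auto using atan_code_inj.
Qed.
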